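(* Let $X,Y$ be continuous random variables and $\mathcal{B}$ a natural correlation basis. Then: (i) if $(X,Y)$ is h-symmetric, $\rho^B_{jk}(X,Y)=0$ for $k$ odd; (ii) if $(X,Y)$ is v-symmetric, $\rho^B_{jk}(X,Y)=0$ for $j$ odd; (iii) if $(X,Y)$ is radially symmetric, $\rho^B_{jk}(X,Y)=0$ for $j+k$ odd; (iv) if $(X,Y)$ is jointly symmetric, $\rho^B_{jk}(X,Y)=0$ for $j$ odd or $k$ odd.
   Context: A correlation basis is a complete orthonormal system $\{B_j:j\in\mathbb{N}_0\}$ of $\mathcal{L}^2([0,1])$ with $B_0\equiv1$. It is natural if each $B_j$, $j\ge1$, is continuous on $[0,1]$, continuously differentiable on $(0,1)$ with bounded derivative vanishing exactly at its turning points, piecewise strictly monotonic on a finite partition, and satisfies: $B_j'>0$ on some $(1-\epsilon_j,1)$; $B_j$ has exactly $j-1$ turning points; $B_j(1-u)=(-1)^jB_j(u)$. Basis correlation: $\rho^B_{jk}(X,Y)=\rho(B_j(F_X(X)),B_k(F_Y(Y)))$. A random vector $(X,Y)$ is h-symmetric if $(X,Y-a)\stackrel{d}{=}(X,a-Y)$ for some $a\in\mathbb{R}$; v-symmetric if $(X-b,Y)\stackrel{d}{=}(b-X,Y)$ for some $b\in\mathbb{R}$; radially symmetric if $(X-b,Y-a)\stackrel{d}{=}(b-X,a-Y)$ for some $a,b\in\mathbb{R}$; jointly symmetric if it is both h-symmetric and v-symmetric. *)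

From HB Require Import structures.
From mathcomp Require Import all_boot all_order all_algebra.
From mathcomp Require Import all_classical all_reals all_analysis.
Set Implicit Arguments. Unset Strict Implicit. Unset Printing Implicit Defensive.
Import Order.TTheory GRing.Theory Num.Theory.
Import numFieldNormedType.Exports.
Local Open Scope classical_set_scope.
Local Open Scope ring_scope.

Section Defs.
Variable R : realType.

Definition I01 : set R := `[0, 1].
Definition I01o : set R := `]0, 1[.

Definition orthonormal_L2 (B : nat -> R -> R) : Prop :=
  (forall j, measurable_fun I01 (B j)) /\
  (forall j, (@lebesgue_measure R).-integrable I01
                (fun x => ((B j x) ^+ 2)%:E)) /\
  (forall j k, (\int[@lebesgue_measure R]_(x in I01) (B j x * B k x)%:E
                = ((j == k)%:R : R)%:E)%E).

Definition complete_L2 (B : nat -> R -> R) : Prop :=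
  forall f : R -> R, measurable_fun I01 f ->
    (@lebesgue_measure R).-integrable I01 (fun x => ((f x) ^+ 2)%:E) ->
    (forall j, (\int[@lebesgue_measure R]_(x in I01) (f x * B j x)%:E
                = (0:R)%:E)%E) ->
    {ae @lebesgue_measure R, forall x, I01 x -> f x = 0}.

Definition correlation_basis (B : nat -> R -> R) : Prop :=
  orthonormal_L2 B /\ complete_L2 B /\ (forall u, I01 u -> B 0%N u = 1).

Definition strictly_incr_on (f : R -> R) (A : set R) : Prop :=
  forall x y, A x -> A y -> x < y -> f x < f y.
Definition strictly_decr_on (f : R -> R) (A : set R) : Prop :=
  forall x y, A x -> A y -> x < y -> f y < f x.

Definition turning_point (f : R -> R) (t : R) : Prop :=
  I01o t /\
  exists2 d : R, 0 < d &
    (strictly_incr_on f `[t - d, t]%classic /\ strictly_decr_on f `[t, t + d]%classic) \/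
    (strictly_decr_on f `[t - d, t]%classic /\ strictly_incr_on f `[t, t + d]%classic).

Definition piecewise_strictly_monotonic (f : R -> R) : Prop :=
  exists (n : nat) (s : nat -> R),
    s 0%N = 0 /\ s n = 1 /\ (forall i, (i < n)%N -> s i < s i.+1) /\
    (forall i, (i < n)%N ->
       strictly_incr_on f `[s i, s i.+1]%classic \/ strictly_decr_on f `[s i, s i.+1]%classic).

Definition natural_basis_function (j : nat) (f : R -> R) : Prop :=
  {within I01, continuous f} /\
  (forall u, I01o u -> derivable f u 1) /\
  {within I01o, continuous (derive1 f)} /\
  (exists M : R, forall u, I01o u -> `|derive1 f u| <= M) /\
  (forall u, I01o u -> (derive1 f u = 0 <-> turning_point f u)) /\
  piecewise_strictly_monotonic f /\
  (exists2 e : R, 0 < e & forall u, `]1 - e, 1%R[%classic u -> 0 < derive1 f u) /\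
  (exists s : seq R, uniq s /\ size s = j.-1 /\
     forall u, turning_point f u <-> u \in s) /\
  (forall u, I01 u -> f (1 - u) = (-1) ^+ j * f u).

Definition natural_correlation_basis (B : nat -> R -> R) : Prop :=
  correlation_basis B /\ (forall j, (0 < j)%N -> natural_basis_function j (B j)).

Context {d : measure_display} {T : measurableType d}.
Variable P : probability T R.

Definition cdf (X : T -> R) (x : R) : R := fine (P [set w | X w <= x]).

Definition continuous_rv (X : T -> R) : Prop :=
  measurable_fun setT X /\ continuous (cdf X).

Definition expect (U : T -> R) : R := fine (\int[P]_w (U w)%:E)%E.
Definition covariance (U V : T -> R) : R :=
  expect (fun w => U w * V w) - expect U * expect V.
Definition pearson (U V : T -> R) : R :=
  covariance U V / Num.sqrt (covariance U U * covariance V V).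

Definition basis_corr (B : nat -> R -> R) (X Y : T -> R) (j k : nat) : R :=
  pearson (fun w => B j (cdf X (X w))) (fun w => B k (cdf Y (Y w))).

Definition eq_dist2 (U V : T -> R * R) : Prop :=
  forall A : set (R * R), measurable A -> P (U @^-1` A) = P (V @^-1` A).

Definition h_symmetric (X Y : T -> R) : Prop :=
  exists a : R, eq_dist2 (fun w => (X w, Y w - a)) (fun w => (X w, a - Y w)).
Definition v_symmetric (X Y : T -> R) : Prop :=
  exists b : R, eq_dist2 (fun w => (X w - b, Y w)) (fun w => (b - X w, Y w)).
Definition radially_symmetric (X Y : T -> R) : Prop :=
  exists a b : R,
    eq_dist2 (fun w => (X w - b, Y w - a)) (fun w => (b - X w, a - Y w)).
Definition jointly_symmetric (X Y : T -> R) : Prop :=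
  h_symmetric X Y /\ v_symmetric X Y.

End Defs.

From Pilot Require Import Defs.
From HB Require Import structures.
From mathcomp Require Import all_boot all_order all_algebra.
From mathcomp Require Import all_classical all_reals all_analysis.
From mathcomp Require Import measurable_realfun lra.
Set Implicit Arguments. Unset Strict Implicit. Unset Printing Implicit Defensive.
Import Order.TTheory GRing.Theory Num.Theory.
Import numFieldNormedType.Exports.
Local Open Scope classical_set_scope.
Local Open Scope ring_scope.

(* A reflection [X - b |-> b - X] that preserves the law of [X] turns [F_X(X)]
   into [1 - F_X(X)], because a continuous [F_X] leaves no atoms; the parity
   [B_j (1 - u) = (-1)^j B_j u] of a natural basis then multiplies
   [B_j (F_X X)] by [(-1)^j].  When the total sign picked up
   by [B_j (F_X X) * B_k (F_Y Y)] is [-1], this product and the factor with an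
   odd sign both have expectations equal to their own negatives, so both
   vanish, and with them the covariance and the basis correlation. *)

Section distribution_facts.
Context {R : realType} {d : measure_display} {T : measurableType d}.
Variable P : probability T R.
Implicit Types (X : T -> R) (A B : set T).

Lemma fine_probabilityU A B : measurable A -> measurable B -> A `&` B = set0 ->
  fine (P (A `|` B)) = fine (P A) + fine (P B).
Proof. by move=> mA mB AB0; rewrite measureU// fineD// fin_num_measure. Qed.

Lemma fine_probabilityC A : measurable A -> fine (P (~` A)) = 1 - fine (P A).
Proof. by move=> mA; rewrite probability_setC// fineB// fin_num_measure. Qed.

Lemma fine_probability_le A B : measurable A -> measurable B -> A `<=` B ->
  fine (P A) <= fine (P B).
Proof. by move=> mA mB AB; rewrite fine_le ?fin_num_measure// le_measure// inE. Qed.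

Lemma measurable_preimage X (D : set R) :
  measurable_fun setT X -> measurable D -> measurable (X @^-1` D).
Proof. by move=> mX mD; rewrite -[_ @^-1` _]setTI; exact: mX. Qed.

Lemma measurable_rv_le X c : measurable_fun setT X -> measurable [set w | X w <= c].
Proof.
move=> mX; have := measurable_preimage mX (measurable_itv `]-oo, c]).
by congr measurable; apply/seteqP; split=> w /=; rewrite in_itv.
Qed.

Lemma measurable_rv_eq X c : measurable_fun setT X -> measurable [set w | X w = c].
Proof. by move=> mX; exact: measurable_preimage mX (measurable_set1 c). Qed.

Lemma cdf_in01 X x : measurable_fun setT X -> I01 (Defs.cdf P X x).
Proof.
move=> mX; rewrite /I01 /= in_itv /= fine_ge0 ?measure_ge0//=.
have := fine_probability_le (measurable_rv_le x mX) measurableT (@subsetT _ _).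
by rewrite probability_setT.
Qed.

Lemma continuous_rv_atom0 X t : continuous_rv P X -> fine (P [set w | X w = t]) = 0.
Proof.
case=> mX cX; apply/eqP; rewrite eq_le fine_ge0 ?measure_ge0// andbT.
set p := fine (P [set w | X w = t]).
have atom_le s : s < t -> Defs.cdf P X s <= Defs.cdf P X t - p.
  move=> st; have mXs := measurable_rv_le s mX; have mXt := measurable_rv_eq t mX.
  rewrite lerBrDr /p /Defs.cdf -fine_probabilityU //; last first.
    by apply/seteqP; split=> w //= [+ wt]; rewrite wt leNgt st.
  apply: fine_probability_le; [exact: measurableU|exact: measurable_rv_le|].
  by move=> w [/le_trans/(_ (ltW st))|/= ->].
have : Defs.cdf P X t <= Defs.cdf P X t - p.
  apply: (ler_cvg_to (cvg_at_left_filter (cX t)) (cvg_cst _)).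
  by near=> s; apply: atom_le; near: s; exact: nbhs_left_lt.
lra.
Unshelve. all: end_near. Qed.

Lemma continuous_rv_ge X t : continuous_rv P X ->
  fine (P [set w | t <= X w]) = 1 - Defs.cdf P X t.
Proof.
move=> cX; have mX := cX.1.
have -> : [set w | t <= X w] = [set w | X w = t] `|` ~` [set w | X w <= t].
  apply/seteqP; split=> w /=.
    by rewrite le_eqVlt => /orP[/eqP ->|tX]; [left|right; rewrite /= leNgt tX].
  by case=> [->|/negP]; rewrite ?lexx // -ltNge => /ltW.
rewrite fine_probabilityU ?continuous_rv_atom0 ?add0r ?fine_probabilityC //.
- exact: measurable_rv_le.
- exact: measurable_rv_eq.
- by apply: measurableC; exact: measurable_rv_le.
- by apply/seteqP; split=> w //= [->]; rewrite lexx.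
Qed.

Definition eq_dist (U V : T -> R) : Prop :=
  forall D : set R, measurable D -> P (U @^-1` D) = P (V @^-1` D).

Lemma eq_dist2_fst (U V : T -> R * R) :
  eq_dist2 P U V -> eq_dist (fst \o U) (fst \o V).
Proof.
move=> E D mD; apply: (E (fst @^-1` D)).
by rewrite -[_ @^-1` _]setTI; exact: measurable_fst.
Qed.

Lemma eq_dist2_snd (U V : T -> R * R) :
  eq_dist2 P U V -> eq_dist (snd \o U) (snd \o V).
Proof.
move=> E D mD; apply: (E (snd @^-1` D)).
by rewrite -[_ @^-1` _]setTI; exact: measurable_snd.
Qed.

Lemma cdf_reflect X a : continuous_rv P X ->
  eq_dist (fun w => X w - a) (fun w => a - X w) ->
  forall t, Defs.cdf P X (a - t + a) = 1 - Defs.cdf P X t.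
Proof.
move=> cX E t; rewrite -continuous_rv_ge // /Defs.cdf.
have -> : [set w | X w <= a - t + a] = (fun w => X w - a) @^-1` `]-oo, a - t].
  by apply/seteqP; split=> w /=; rewrite in_itv /= lerBlDr.
rewrite E; last exact: measurable_itv.
by congr (fine (P _)); apply/seteqP; split=> w /=; rewrite in_itv /= lerD2l lerN2.
Qed.

End distribution_facts.

(* Both sides vanish when [x] and [y] are both [+oo] or both [-oo]. *)
Lemma fine_subeC {R : realType} (x y : \bar R) : fine (y - x)%E = - fine (x - y)%E.
Proof. by case: x => [x| |]; case: y => [y| |] //=; rewrite ?opprB ?oppr0. Qed.

Section expectation_facts.
Context {R : realType} {d : measure_display} {T : measurableType d}.
Variable P : probability T R.

Lemma expectN (f : T -> R) : Defs.expect P (fun w => - f w) = - Defs.expect P f.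
Proof.
rewrite /Defs.expect integralE [in RHS]integralE.
have -> : (fun w => (- f w)%:E) = (\- (fun w => (f w)%:E))%E.
  by apply/funext => w; rewrite EFinN.
by rewrite funeposN funenegN fine_subeC.
Qed.

Lemma eq_dist2_ge0_integral (Z1 Z2 : T -> R * R) (h : R * R -> \bar R) :
  measurable_fun setT Z1 -> measurable_fun setT Z2 -> measurable_fun setT h ->
  (forall z, 0 <= h z)%E -> eq_dist2 P Z1 Z2 ->
  (\int[P]_w (h \o Z1) w = \int[P]_w (h \o Z2) w)%E.
Proof.
move=> mZ1 mZ2 mh h0 E.
have := ge0_integral_pushforward mZ1 P measurableT mh (fun z _ => h0 z).
have := ge0_integral_pushforward mZ2 P measurableT mh (fun z _ => h0 z).
rewrite !preimage_setT => <- <-.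
by apply: eq_measure_integral => D mD _; exact: E.
Qed.

(* No integrability is needed: positive and negative parts are transported
   separately. *)
Lemma eq_dist2_integral (Z1 Z2 : T -> R * R) (h : R * R -> \bar R) :
  measurable_fun setT Z1 -> measurable_fun setT Z2 -> measurable_fun setT h ->
  eq_dist2 P Z1 Z2 -> (\int[P]_w (h \o Z1) w = \int[P]_w (h \o Z2) w)%E.
Proof.
move=> mZ1 mZ2 mh E; rewrite integralE [RHS]integralE.
rewrite (funepos_comp h Z1) (funeneg_comp h Z1) (funepos_comp h Z2) (funeneg_comp h Z2).
congr (_ - _)%E.
  exact: eq_dist2_ge0_integral mZ1 mZ2 (measurable_funepos mh) (funepos_ge0 h) E.
exact: eq_dist2_ge0_integral mZ1 mZ2 (measurable_funeneg mh) (funeneg_ge0 h) E.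
Qed.

Lemma eq_dist2_expect (Z1 Z2 : T -> R * R) (g : R * R -> R) :
  measurable_fun setT Z1 -> measurable_fun setT Z2 -> measurable_fun setT g ->
  eq_dist2 P Z1 Z2 -> Defs.expect P (g \o Z1) = Defs.expect P (g \o Z2).
Proof.
move=> mZ1 mZ2 mg E; rewrite /Defs.expect; congr fine.
have mEg : measurable_fun setT (EFin \o g) by exact/measurable_EFinP.
exact: eq_dist2_integral mZ1 mZ2 mEg E.
Qed.

Lemma eq_dist2_expect_eq0 (Z1 Z2 : T -> R * R) (g : R * R -> R) :
  measurable_fun setT Z1 -> measurable_fun setT Z2 -> measurable_fun setT g ->
  eq_dist2 P Z1 Z2 -> (forall w, g (Z2 w) = - g (Z1 w)) ->
  Defs.expect P (g \o Z1) = 0.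
Proof.
move=> mZ1 mZ2 mg E gN; have := eq_dist2_expect mZ1 mZ2 mg E.
have -> : g \o Z2 = (fun w => - (g \o Z1) w) by apply/funext => w; exact: gN.
by rewrite expectN => /eqP; rewrite -addr_eq0 -mulr2n mulrn_eq0 => /eqP.
Qed.

Lemma pearson_eq0 (U V : T -> R) :
  Defs.expect P (fun w => U w * V w) = 0 ->
  Defs.expect P U = 0 \/ Defs.expect P V = 0 -> pearson P U V = 0.
Proof.
move=> EUV EUorV; rewrite /pearson /Defs.covariance EUV.
by case: EUorV => ->; rewrite ?mul0r ?mulr0 subr0 mul0r.
Qed.

Lemma pearson_eq0_of_reflection (U V : T -> R) (Z1 Z2 : T -> R * R)
    (f g : R -> R) (m n : nat) :
  measurable_fun setT Z1 -> measurable_fun setT Z2 ->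
  measurable_fun setT f -> measurable_fun setT g ->
  eq_dist2 P Z1 Z2 -> odd (m + n) ->
  (forall w, f (Z1 w).1 = U w) -> (forall w, g (Z1 w).2 = V w) ->
  (forall w, f (Z2 w).1 = (-1) ^+ m * U w) ->
  (forall w, g (Z2 w).2 = (-1) ^+ n * V w) ->
  pearson P U V = 0.
Proof.
move=> mZ1 mZ2 mf mg E odd_mn fU gV fZ2 gZ2.
have expect_eq0 (h : R * R -> R) (W : T -> R) (s : nat) :
    measurable_fun setT h -> odd s -> (forall w, h (Z1 w) = W w) ->
    (forall w, h (Z2 w) = (-1) ^+ s * W w) -> Defs.expect P W = 0.
  move=> mh odd_s hW hZ2.
  have -> : W = h \o Z1 by apply/funext => w; rewrite /= hW.
  apply: eq_dist2_expect_eq0 mZ1 mZ2 mh E _ => w.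
  by rewrite hZ2 hW -signr_odd odd_s expr1 mulN1r.
have mf1 : measurable_fun setT (fun z : R * R => f z.1).
  exact: measurableT_comp mf measurable_fst.
have mg2 : measurable_fun setT (fun z : R * R => g z.2).
  exact: measurableT_comp mg measurable_snd.
apply: pearson_eq0.
  apply: (expect_eq0 (fun z => f z.1 * g z.2) _ (m + n)) => //.
  - exact: measurable_funM.
  - by move=> w; rewrite fU gV.
  - by move=> w; rewrite fZ2 gZ2 mulrACA -exprD.
move: odd_mn; rewrite oddD; case: (boolP (odd m)) => [odd_m _|_ /= odd_n].
  by left; apply: (expect_eq0 (fun z => f z.1) _ m).
by right; apply: (expect_eq0 (fun z => g z.2) _ n).
Qed.

End expectation_facts.

Lemma natural_basis_reflect {R : realType} (B : nat -> R -> R) (j : nat) :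
  natural_correlation_basis B -> forall u, I01 u -> B j (1 - u) = (-1) ^+ j * B j u.
Proof.
case=> -[_ [_ B0]] HB u u01; case: j => [|j].
  rewrite expr0 mul1r !B0 //; move: u01; rewrite /I01 /= !in_itv /=.
  by move=> /andP[u0 u1]; rewrite subr_ge0 u1 lerBlDr lerDl u0.
by have [_ [_ [_ [_ [_ [_ [_ [_ ->]]]]]]]] := HB j.+1 isT.
Qed.

Section cdf_score.
Context {R : realType} {d : measure_display} {T : measurableType d}.
Variable P : probability T R.
Implicit Types (X : T -> R) (f : R -> R).

(* [cdf_score X f b] reads [f (F_X X)] off the centred variable [X - b] that
   appears in the symmetry hypotheses. *)
Definition cdf_score X f (b x : R) : R := f (Defs.cdf P X (x + b)).

Lemma measurable_cdf_score X f b : continuous_rv P X -> measurable_fun (@I01 R) f ->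
  measurable_fun setT (cdf_score X f b).
Proof.
case=> mX cX mf.
have mF : measurable_fun setT (fun x : R => Defs.cdf P X (x + b)).
  apply: measurableT_comp; first exact: continuous_measurable_fun.
  by apply: measurable_funD => //; exact: measurable_cst.
apply: (measurable_comp (F := @I01 R)) mf mF; first exact: measurable_itv.
by move=> _ [x _ <-]; exact: cdf_in01.
Qed.

Lemma cdf_score_center X f b w : cdf_score X f b (X w - b) = f (Defs.cdf P X (X w)).
Proof. by rewrite /cdf_score subrK. Qed.

Lemma cdf_score_reflect X (B : nat -> R -> R) j b :
  natural_correlation_basis B -> continuous_rv P X ->
  eq_dist P (fun w => X w - b) (fun w => b - X w) ->
  forall w, cdf_score X (B j) b (b - X w) = (-1) ^+ j * B j (Defs.cdf P X (X w)).
Proof.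
move=> HB cX E w; rewrite /cdf_score cdf_reflect // natural_basis_reflect //.
exact: cdf_in01 cX.1.
Qed.

End cdf_score.

Section symmetric_basis_corr.
Context {R : realType} {d : measure_display} {T : measurableType d}.
Variables (P : probability T R) (X Y : T -> R) (B : nat -> R -> R).
Hypotheses (cX : continuous_rv P X) (cY : continuous_rv P Y).
Hypothesis HB : natural_correlation_basis B.

Let mB j : measurable_fun (@I01 R) (B j) := HB.1.1.1 j.
Let mXB c : measurable_fun setT (fun w => X w - c).
Proof. by apply: measurable_funB cX.1 _; exact: measurable_cst. Qed.
Let mBX c : measurable_fun setT (fun w => c - X w).
Proof. by apply: measurable_funB cX.1; exact: measurable_cst. Qed.
Let mYB c : measurable_fun setT (fun w => Y w - c).
Proof. by apply: measurable_funB cY.1 _; exact: measurable_cst. Qed.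
Let mBY c : measurable_fun setT (fun w => c - Y w).
Proof. by apply: measurable_funB cY.1; exact: measurable_cst. Qed.

Lemma h_symmetric_basis_corr j k :
  h_symmetric P X Y -> odd k -> basis_corr P B X Y j k = 0.
Proof.
move=> [a E] odd_k.
apply: (@pearson_eq0_of_reflection _ _ _ P _ _ _ _
  (cdf_score P X (B j) 0) (cdf_score P Y (B k) a) 0 k _ _ _ _ E) => //.
- exact: measurable_fun_pair cX.1 (mYB a).
- exact: measurable_fun_pair cX.1 (mBY a).
- exact: measurable_cdf_score cX (mB j).
- exact: measurable_cdf_score cY (mB k).
- by move=> w; rewrite /cdf_score addr0.
- exact: cdf_score_center.
- by move=> w; rewrite mul1r /cdf_score addr0.
- exact: cdf_score_reflect (eq_dist2_snd E).
Qed.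

Lemma v_symmetric_basis_corr j k :
  v_symmetric P X Y -> odd j -> basis_corr P B X Y j k = 0.
Proof.
move=> [b E] odd_j.
apply: (@pearson_eq0_of_reflection _ _ _ P _ _ _ _
  (cdf_score P X (B j) b) (cdf_score P Y (B k) 0) j 0 _ _ _ _ E).
- exact: measurable_fun_pair (mXB b) cY.1.
- exact: measurable_fun_pair (mBX b) cY.1.
- exact: measurable_cdf_score cX (mB j).
- exact: measurable_cdf_score cY (mB k).
- by rewrite addn0.
- exact: cdf_score_center.
- by move=> w; rewrite /cdf_score addr0.
- exact: cdf_score_reflect (eq_dist2_fst E).
- by move=> w; rewrite mul1r /cdf_score addr0.
Qed.

Lemma radially_symmetric_basis_corr j k :
  radially_symmetric P X Y -> odd (j + k) -> basis_corr P B X Y j k = 0.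
Proof.
move=> [a [b E]] odd_jk.
apply: (@pearson_eq0_of_reflection _ _ _ P _ _ _ _
  (cdf_score P X (B j) b) (cdf_score P Y (B k) a) j k _ _ _ _ E) => //.
- exact: measurable_fun_pair (mXB b) (mYB a).
- exact: measurable_fun_pair (mBX b) (mBY a).
- exact: measurable_cdf_score cX (mB j).
- exact: measurable_cdf_score cY (mB k).
- exact: cdf_score_center.
- exact: cdf_score_center.
- exact: cdf_score_reflect (eq_dist2_fst E).
- exact: cdf_score_reflect (eq_dist2_snd E).
Qed.

End symmetric_basis_corr.

Theorem proposition4 (R : realType) (d : measure_display) (T : measurableType d)
  (P : probability T R) (X Y : T -> R) (B : nat -> R -> R) :
  continuous_rv P X -> continuous_rv P Y -> natural_correlation_basis B ->
  [/\ (h_symmetric P X Y ->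
         forall j k : nat, (0 < j)%N -> odd k -> basis_corr P B X Y j k = 0),
      (v_symmetric P X Y ->
         forall j k : nat, (0 < k)%N -> odd j -> basis_corr P B X Y j k = 0),
      (radially_symmetric P X Y ->
         forall j k : nat, (0 < j)%N -> (0 < k)%N -> odd (j + k) ->
           basis_corr P B X Y j k = 0) &
      (jointly_symmetric P X Y ->
         forall j k : nat, (0 < j)%N -> (0 < k)%N -> odd j || odd k ->
           basis_corr P B X Y j k = 0)].
Proof.
move=> cX cY HB; split=> [hsym j k _|vsym j k _|rsym j k _ _|[hsym vsym] j k _ _].
- exact: h_symmetric_basis_corr.
- exact: v_symmetric_basis_corr.
- exact: radially_symmetric_basis_corr.
- by case/orP; [exact: v_symmetric_basis_corr|exact: h_symmetric_basis_corr].
Qed.
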